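(* Let $v_1,\dots,v_n\in\mathbb{R}^d$, $x\in[0,1]^n$ with $\sum_i x(i)=q$, and $X=\sum_i x(i)v_iv_i^\top$ with $\lambda_{\min}(X)>0$; let $\lambda_{\mathrm{avg}}(X)=\operatorname{tr}(X)/d$. Let $S\subseteq[n]$ with $|S|=b$, $Z=\sum_{i\in S}v_iv_i^\top$, and $0<\varepsilon<\frac12$. Set $\alpha=\frac{\sqrt d}{\varepsilon\lambda_{\min}(X)}$, let $A=(\alpha Z-\ell I)^{-2}$ where $\ell\in\mathbb{R}$ is the unique scalar with $\alpha Z-\ell I\succ0$ and $\operatorname{tr}(A)=1$, let $S'=\{i\in S:2\alpha\langle v_iv_i^\top,A^{1/2}\rangle<1\}$ and \[ \Phi(i,j)=\frac{\langle v_jv_j^\top,A\rangle}{1+2\alpha\langle v_jv_j^\top,A^{1/2}\rangle}-\frac{\langle v_iv_i^\top,A\rangle}{1-2\alpha\langle v_iv_i^\top,A^{1/2}\rangle}. \] If $\lambda_{\min}(Z)\le(1-2\varepsilon)\lambda_{\min}(X)$ and $b\ge q+2\big(d+\frac d\varepsilon\big)+\frac{2d}{\varepsilon}\sqrt{\frac{\lambda_{\mathrm{avg}}(X)}{\lambda_{\min}(X)}}$, then there exist $i\in S'$ and $j\in[n]\setminus S$ with $\Phi(i,j)\ge\frac{\varepsilon}{b}\lambda_{\min}(X)$ (equivalently, $\max_{i\in S',\,j\in[n]\setminus S}\Phi(i,j)\ge\frac\varepsilon b\lambda_{\min}(X)$).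
   Context: For symmetric matrices $\langle A,B\rangle=\operatorname{tr}(AB)$. *)

From HB Require Import structures.
From mathcomp Require Import all_boot all_order all_algebra.
From mathcomp Require Import reals.
Set Implicit Arguments. Unset Strict Implicit. Unset Printing Implicit Defensive.
Import Order.TTheory GRing.Theory Num.Theory.
Local Open Scope ring_scope.

Definition mxinner (R : realType) (d : nat) (A B : 'M[R]_d) : R := \tr (A *m B).

Definition outer (R : realType) (d : nat) (v : 'cV[R]_d) : 'M[R]_d := v *m v^T.

Definition is_lambda_min (R : realType) (d : nat) (M : 'M[R]_d) (lam : R) : Prop :=
  eigenvalue M lam /\ (forall mu : R, eigenvalue M mu -> lam <= mu).

Definition posdef (R : realType) (d : nat) (M : 'M[R]_d) : Prop :=
  M^T = M /\ forall u : 'cV[R]_d, u != 0 -> 0 < (u^T *m M *m u) 0 0.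
Definition psd (R : realType) (d : nat) (M : 'M[R]_d) : Prop :=
  M^T = M /\ forall u : 'cV[R]_d, 0 <= (u^T *m M *m u) 0 0.

(* Write a_k = <v_k v_k^T, A>, c_k = <v_k v_k^T, A^(1/2)> and delta = eps lambda_min(X) / b.
   If Phi(i, j) < delta for all i in S' and j outside S, let m be the least ratio
   a_i / (1 - 2 alpha c_i) over S'; then a_k >= m (1 - 2 alpha c_k) on S and
   a_k <= (m + delta) (1 + 2 alpha c_k) off S.  Weighting by x and summing gives
     tr(XA) - tr(ZA) <= (m + delta) (q + 2 alpha sum_k x_k c_k) - m (b - 2 alpha tr(Z A^(1/2))).
   This is incompatible with four spectral estimates and the lower bound on b:
   tr(XA) >= lambda_min(X) (Rayleigh quotient, as tr A = 1);
   tr(ZA) < (1 - eps) lambda_min(X), since A <= I forces ell <= alpha lambda_min(Z) - 1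
   while tr((alpha Z - ell I)^-1) <= sqrt d;
   alpha tr(Z A^(1/2)) <= d + d / eps;
   (sum_k x_k c_k)^2 <= tr(X) tr(XA) (Cauchy-Schwarz). *)

From HB Require Import structures.
From mathcomp Require Import all_boot all_order all_algebra.
From mathcomp Require Import reals.
From mathcomp Require Import ring lra.
From mathcomp Require classical_sets.
Set Implicit Arguments. Unset Strict Implicit. Unset Printing Implicit Defensive.
Import Order.TTheory GRing.Theory Num.Theory.
Local Open Scope ring_scope.

Section CauchySchwarz.
Variable R : realFieldType.

Lemma quadratic_ge0_discr (a b c : R) : 0 <= a ->
  (forall t, 0 <= a * t ^+ 2 + 2 * b * t + c) -> b ^+ 2 <= a * c.
Proof.
move=> a_ge0 quad_ge0; have [a0|a_neq0] := eqVneq a 0.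
  have [->|b_neq0] := eqVneq b 0; first by rewrite expr0n a0 mul0r.
  have := quad_ge0 (- (c + 1) / (2 * b)).
  have -> : 2 * b * (- (c + 1) / (2 * b)) = - (c + 1) by field.
  by rewrite a0 !mul0r; lra.
have a_gt0 : 0 < a by rewrite lt_def a_neq0.
have := quad_ge0 (- b / a).
have -> : a * (- b / a) ^+ 2 + 2 * b * (- b / a) + c = (a * c - b ^+ 2) / a by field.
by rewrite pmulr_lge0 ?invr_gt0 // subr_ge0.
Qed.

Lemma quadratic_ge0 (p c r t : R) : 0 <= p -> 0 <= r -> c ^+ 2 <= p * r ->
  0 <= p * t ^+ 2 - 2 * c * t + r.
Proof.
move=> p_ge0 r_ge0 c2_le; have [p0|p_neq0] := eqVneq p 0.
  have c0 : c = 0 by apply/eqP; rewrite -sqrf_eq0 eq_le sqr_ge0 andbT -(mul0r r) -p0.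
  by rewrite p0 c0 !(mul0r, mulr0) subr0 add0r.
have p_gt0 : 0 < p by rewrite lt_def p_neq0.
rewrite -(pmulr_rge0 _ p_gt0).
have -> : p * (p * t ^+ 2 - 2 * c * t + r) = (p * t - c) ^+ 2 + (p * r - c ^+ 2) by ring.
by rewrite addr_ge0 ?sqr_ge0 ?subr_ge0.
Qed.

Lemma weighted_cauchy_schwarz (I : finType) (w p r c : I -> R) :
  (forall k, 0 <= w k) -> (forall k, 0 <= p k) -> (forall k, 0 <= r k) ->
  (forall k, c k ^+ 2 <= p k * r k) ->
  (\sum_k w k * c k) ^+ 2 <= (\sum_k w k * p k) * (\sum_k w k * r k).
Proof.
move=> w_ge0 p_ge0 r_ge0 c2_le; rewrite -sqrrN.
apply: quadratic_ge0_discr => [|t]; first by apply: sumr_ge0 => k _; rewrite mulr_ge0.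
have -> : (\sum_k w k * p k) * t ^+ 2 + 2 * - (\sum_k w k * c k) * t + \sum_k w k * r k
    = \sum_k w k * (p k * t ^+ 2 - 2 * c k * t + r k).
  rewrite mulrN mulNr mulr_suml mulr_sumr mulr_suml -sumrN -!big_split /=.
  by apply: eq_bigr => k _; ring.
by apply: sumr_ge0 => k _; rewrite mulr_ge0 ?quadratic_ge0.
Qed.

Lemma cauchy_schwarz (I : finType) (a b : I -> R) :
  (\sum_k a k * b k) ^+ 2 <= (\sum_k a k ^+ 2) * (\sum_k b k ^+ 2).
Proof.
have := @weighted_cauchy_schwarz I (fun=> 1) (fun k => a k ^+ 2) (fun k => b k ^+ 2)
  (fun k => a k * b k).
rewrite !(eq_bigr _ (fun k _ => mul1r _)); apply=> k //; rewrite ?sqr_ge0 //.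
by rewrite exprMn.
Qed.

Lemma le_of_sqr_le (x s : R) : 0 <= s -> x ^+ 2 <= s ^+ 2 -> x <= s.
Proof. by move=> s_ge0 x2_le; nra. Qed.

End CauchySchwarz.

Section SquaredNorms.
Variables (R : realFieldType) (d : nat).
Implicit Types (M N : 'M[R]_d) (u w : 'cV[R]_d).

Definition norm2 u := \sum_i u i 0 ^+ 2.
Definition frob2 M := \sum_i \sum_j M i j ^+ 2.
Definition qform M u := (u^T *m M *m u) 0 0.

Lemma norm2_ge0 u : 0 <= norm2 u.
Proof. by apply: sumr_ge0 => i _; rewrite sqr_ge0. Qed.

Lemma norm2_gt0 u : u != 0 -> 0 < norm2 u.
Proof.
move=> u_neq0; rewrite lt_def norm2_ge0 andbT; apply: contra u_neq0.
rewrite psumr_eq0 => [/allP u0|i _]; last exact: sqr_ge0.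
apply/eqP/matrixP => i j; rewrite (ord1 j) mxE.
by apply/eqP; rewrite -sqrf_eq0; apply: u0; rewrite mem_index_enum.
Qed.

Lemma norm20 : norm2 (0 : 'cV[R]_d) = 0.
Proof. by rewrite /norm2 big1 // => i _; rewrite mxE expr0n. Qed.

Lemma qform0 M : qform M 0 = 0.
Proof. by rewrite /qform trmx0 !mul0mx mxE. Qed.

Lemma frob2_ge0 M : 0 <= frob2 M.
Proof. by apply: sumr_ge0 => i _; apply: sumr_ge0 => j _; rewrite sqr_ge0. Qed.

Lemma cV_dotE u w : (u^T *m w) 0 0 = \sum_i u i 0 * w i 0.
Proof. by rewrite mxE; apply: eq_bigr => i _; rewrite mxE. Qed.

Lemma norm2E u : norm2 u = (u^T *m u) 0 0.
Proof. by rewrite cV_dotE; apply: eq_bigr => i _; rewrite expr2. Qed.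

Lemma frob2E M : frob2 M = \tr (M^T *m M).
Proof.
rewrite /frob2 exchange_big; apply: eq_bigr => j _; rewrite mxE.
by apply: eq_bigr => i _; rewrite mxE expr2.
Qed.

Lemma norm2_mulmx_le M u : norm2 (M *m u) <= frob2 M * norm2 u.
Proof.
rewrite /norm2 /frob2 mulr_suml; apply: ler_sum => i _.
by rewrite mxE; apply: cauchy_schwarz.
Qed.

Lemma qform_mulTmx M u : qform (M^T *m M) u = norm2 (M *m u).
Proof. by rewrite /qform norm2E trmx_mul !mulmxA. Qed.

Lemma qform_sqr_le M u : qform M u ^+ 2 <= frob2 M * norm2 u ^+ 2.
Proof.
rewrite /qform -mulmxA cV_dotE; apply: le_trans (cauchy_schwarz _ _) _.
rewrite -/(norm2 u) -/(norm2 (M *m u)) expr2 mulrCA ler_wpM2l ?norm2_ge0 //.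
exact: norm2_mulmx_le.
Qed.

Lemma tr_sqr_le M : (\tr M) ^+ 2 <= d%:R * frob2 M.
Proof.
have -> : \tr M = \sum_i 1 * M i i by apply: eq_bigr => i _; rewrite mul1r.
apply: le_trans (cauchy_schwarz _ _) _.
rewrite (eq_bigr (fun=> 1)) ?expr1n // sumr_const card_ord.
rewrite ler_wpM2l ?ler0n //; apply: ler_sum => i _.
by rewrite (bigD1 i) //= lerDl; apply: sumr_ge0 => j _; exact: sqr_ge0.
Qed.

Lemma tr_conjTmx_cols M N : \tr (N^T *m M *m N) = \sum_e qform M (col e N).
Proof.
apply: eq_bigr => e _; rewrite /qform.
have -> : (col e N)^T *m M *m col e N = row e (N^T *m M *m N) *m delta_mx e 0.
  by rewrite colE trmx_mul trmx_delta rowE !mulmxA.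
by rewrite -colE !mxE.
Qed.

Lemma sum_norm2_col N : \sum_e norm2 (col e N) = frob2 N.
Proof.
rewrite /frob2 /norm2 exchange_big; apply: eq_bigr => i _.
by apply: eq_bigr => j _; rewrite mxE.
Qed.

End SquaredNorms.

Section Rayleigh.
Variables (R : realType) (d : nat).
Implicit Types (M : 'M[R]_d) (u w : 'cV[R]_d).
Import classical_sets.

Definition bform M w u := (w^T *m M *m u) 0 0.

Lemma bformC M w u : M^T = M -> bform M u w = bform M w u.
Proof.
move=> MT; rewrite /bform.
transitivity ((u^T *m M *m w)^T 0 0); first by rewrite [RHS]mxE.
by rewrite !trmx_mul trmxK MT mulmxA.
Qed.

Lemma qformD M w u t : M^T = M ->
  qform M (w + t *: u) = qform M w + 2 * bform M w u * t + qform M u * t ^+ 2.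
Proof.
move=> MT; rewrite /qform.
have -> : (w + t *: u)^T = w^T + t *: u^T by rewrite linearD linearZ.
rewrite !mulmxDl !mulmxDr -!scalemxAl -!scalemxAr.
have := bformC w u MT; rewrite /bform.
move: (w^T *m M *m w) (w^T *m M *m u) (u^T *m M *m w) (u^T *m M *m u) => a b b' c.
by rewrite !mxE => ->; ring.
Qed.

Lemma bform_sqr_le M w u : psd M -> bform M w u ^+ 2 <= qform M u * qform M w.
Proof.
case=> MT M_psd; apply: quadratic_ge0_discr => [|t]; first exact: M_psd.
by have := M_psd (w + t *: u); rewrite -/(qform _ _) qformD //; lra.
Qed.

Lemma qform_norm_le M u : `|qform M u| <= (frob2 M + 1) * norm2 u.
Proof.
have F_ge0 := frob2_ge0 M; have n_ge0 := norm2_ge0 u.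
apply: le_of_sqr_le; first by rewrite mulr_ge0 // addr_ge0.
rewrite -normrX ger0_norm ?sqr_ge0 //; apply: le_trans (qform_sqr_le M u) _.
by rewrite exprMn ler_wpM2r ?sqr_ge0 //; nra.
Qed.

Lemma norm2_mulmx_le_qform M u : psd M -> norm2 (M *m u) <= (frob2 M + 1) * qform M u.
Proof.
move=> M_psd; have [MT qform_ge0] := M_psd.
have bform_norm2 : bform M (M *m u) u = norm2 (M *m u).
  by rewrite /bform norm2E trmx_mul MT !mulmxA.
have := bform_sqr_le (M *m u) u M_psd; rewrite bform_norm2.
have := qform_norm_le M (M *m u); rewrite ger0_norm; last exact: qform_ge0.
have := qform_ge0 u; have := norm2_ge0 (M *m u); have := frob2_ge0 M.
rewrite -/(qform M u) -/(qform M (M *m u)).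
move: (norm2 _) (qform M u) (qform M (M *m u)) => n a c F_ge0 n_ge0 a_ge0 c_le n2_le.
have [->|n_gt0] := eqVneq n 0; first by rewrite mulr_ge0 ?addr_ge0.
nra.
Qed.

Lemma psd_unitmx_coercive M : psd M -> M \in unitmx ->
  exists2 c, 0 < c & forall u, c * norm2 u <= qform M u.
Proof.
move=> M_psd M_unit; set G := frob2 (invmx M) * (frob2 M + 1).
have G_ge0 : 0 <= G by rewrite mulr_ge0 ?addr_ge0 ?frob2_ge0.
exists (G + 1)^-1 => [|u]; first by rewrite invr_gt0 ltr_wpDl.
have norm2_le : norm2 u <= G * qform M u.
  have := norm2_mulmx_le (invmx M) (M *m u); rewrite mulKmx // => /le_trans; apply.
  by rewrite /G -mulrA ler_wpM2l ?frob2_ge0 ?norm2_mulmx_le_qform.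
rewrite mulrC -ler_pdivlMr ?invr_gt0 ?ltr_wpDl // invrK.
by have := M_psd.2 u; rewrite -/(qform M u); nra.
Qed.

Lemma qform_subr_scalar M mu u : qform (M - mu%:M) u = qform M u - mu * norm2 u.
Proof. by rewrite /qform mulmxBr mulmxBl mul_mx_scalar -scalemxAl norm2E !mxE. Qed.

Lemma eigenvalueNunitmx M mu : M - mu%:M \notin unitmx -> eigenvalue M mu.
Proof. by rewrite /eigenvalue /eigenspace kermx_eq0 row_free_unit. Qed.

(* With mu the infimum of the Rayleigh quotient, M - mu I is positive semidefinite; were it
   invertible it would be coercive, pushing the infimum above mu. *)
Lemma eigenvalue_le_rayleigh M u : M^T = M -> u != 0 ->
  exists2 mu, eigenvalue M mu & mu * norm2 u <= qform M u.
Proof.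
move=> MT u_neq0; pose E : set R := fun r => exists2 w, w != 0 & r = qform M w / norm2 w.
have E_lb : lbound E (- (frob2 M + 1)).
  move=> _ [w w_neq0 ->]; rewrite ler_pdivlMr ?norm2_gt0 // mulNr.
  by have := qform_norm_le M w; rewrite ler_norml => /andP[].
have E_u : E (qform M u / norm2 u) by exists u.
have inf_lb : forall w, inf E * norm2 w <= qform M w.
  move=> w; have [->|w_neq0] := eqVneq w 0; first by rewrite qform0 norm20 mulr0.
  by rewrite -ler_pdivlMr ?norm2_gt0 //; apply: ge_inf; [exists (- (frob2 M + 1)) | exists w].
exists (inf E); last exact: inf_lb.
apply: eigenvalueNunitmx; apply/negP => shift_unit.
have shift_psd : psd (M - (inf E)%:M).
  split=> [|w]; first by rewrite linearB /= MT tr_scalar_mx.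
  by rewrite -/(qform _ _) qform_subr_scalar subr_ge0.
have [c c_gt0 coercive] := psd_unitmx_coercive shift_psd shift_unit.
suff : inf E + c <= inf E by lra.
apply: lb_le_inf; first by exists (qform M u / norm2 u).
move=> _ [w w_neq0 ->]; rewrite ler_pdivlMr ?norm2_gt0 //.
by have := coercive w; rewrite qform_subr_scalar; lra.
Qed.

Lemma rayleigh_lb M lam : M^T = M -> (forall mu, eigenvalue M mu -> lam <= mu) ->
  forall u, lam * norm2 u <= qform M u.
Proof.
move=> MT lam_lb u; have [->|u_neq0] := eqVneq u 0; first by rewrite qform0 norm20 mulr0.
have [mu /lam_lb lam_le] := eigenvalue_le_rayleigh MT u_neq0.
by apply: le_trans; rewrite ler_wpM2r ?norm2_ge0.
Qed.

End Rayleigh.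

Section SwapArithmetic.
Variable R : realFieldType.

Lemma average_ratio_lt (Y W T E m delta lam eps : R) :
  0 <= m -> 0 <= delta -> 0 <= E -> lam <= Y -> W + eps * lam < lam ->
  delta * E <= eps * lam -> Y - W <= (m + delta) * T - m * E -> m * E <= W ->
  Y * E < lam * T.
Proof.
move=> m_ge0 delta_ge0 E_ge0 lam_le W_lt deltaE_le swap_le mE_le.
(* T <= E contradicts the hypotheses outright; otherwise use m <= W / E. *)
have [T_le|E_lt] := leP T E.
  have : delta * T <= delta * E by rewrite ler_wpM2l.
  have : m * (T - E) <= 0 by rewrite mulr_ge0_le0 // subr_le0.
  lra.
have : (m * E) * (T - E) <= W * (T - E) by rewrite ler_wpM2r // subr_ge0 ltW.
have : (Y - W) * E <= ((m + delta) * T - m * E) * E by rewrite ler_wpM2r.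
have : delta * E * T <= eps * lam * T by rewrite ler_wpM2r // ltW // (le_lt_trans E_ge0).
have : (W + eps * lam) * T < lam * T by rewrite ltr_pM2r // (le_lt_trans E_ge0).
lra.
Qed.

Lemma mul_le_of_sqr_mul_le (Y p G lam : R) : 0 < lam -> lam <= Y -> 0 <= G ->
  p ^+ 2 * lam <= G ^+ 2 * Y -> lam * p <= G * Y.
Proof.
move=> lam_gt0 lam_le G_ge0 p2_le; apply: le_of_sqr_le; first by rewrite mulr_ge0 //; lra.
have : lam * (G ^+ 2 * Y) <= Y * (G ^+ 2 * Y) by rewrite ler_wpM2r // mulr_ge0 ?sqr_ge0 //; lra.
have : lam * (p ^+ 2 * lam) <= lam * (G ^+ 2 * Y) by rewrite ler_wpM2l // ltW.
by rewrite !exprMn; nra.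
Qed.

End SwapArithmetic.

Section Swap.
Variables (R : realFieldType) (I : finType) (S : {set I}) (x a c : I -> R) (al : R).
Hypotheses (x01 : forall k, 0 <= x k <= 1) (a_ge0 : forall k, 0 <= a k)
  (c_ge0 : forall k, 0 <= c k) (al_ge0 : 0 <= al).

Let S' := [set i in S | 2 * al * c i < 1].

Lemma no_good_swap_bounds (delta : R) i0 : i0 \in S' ->
  (forall i j, i \in S' -> j \notin S ->
     a j / (1 + 2 * al * c j) - a i / (1 - 2 * al * c i) < delta) ->
  exists2 m, 0 <= m & (forall k, k \in S -> m * (1 - 2 * al * c k) <= a k) /\
                      (forall k, k \notin S -> a k <= (m + delta) * (1 + 2 * al * c k)).
Proof.
move=> i0_in no_swap; pose g k := a k / (1 - 2 * al * c k).
have [i1 i1_in g_min] := arg_minP g i0_in.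
have /setIdP[_ i1_small] := i1_in.
exists (g i1); first by rewrite divr_ge0 // subr_ge0 ltW.
split=> k k_S.
  have [k_small|k_big] := ltP (2 * al * c k) 1.
    have k_in : k \in S' by rewrite /S' inE k_S.
    by rewrite -ler_pdivlMr ?subr_gt0 //; apply: g_min.
  by apply: le_trans (a_ge0 k); rewrite mulr_ge0_le0 ?subr_le0 // divr_ge0 // subr_ge0 ltW.
have pos : 0 < 1 + 2 * al * c k by rewrite ltr_pwDl // !mulr_ge0.
by rewrite -ler_pdivrMr // -lerBlDl; apply: ltW; apply: no_swap.
Qed.

Lemma sum_swap_bounds (m delta : R) : 0 <= m -> 0 <= delta ->
  (forall k, k \in S -> m * (1 - 2 * al * c k) <= a k) ->
  (forall k, k \notin S -> a k <= (m + delta) * (1 + 2 * al * c k)) ->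
  \sum_k x k * a k - \sum_(k in S) a k <=
  (m + delta) * \sum_k x k * (1 + 2 * al * c k) - m * \sum_(k in S) (1 - 2 * al * c k).
Proof.
move=> m_ge0 delta_ge0 lb_in ub_out.
rewrite [\sum_k x k * a k](bigID (mem S)) [\sum_k x k * (_ + _)](bigID (mem S)) /= mulrDr.
have in_S : \sum_(k in S) (x k * a k - a k) <=
    \sum_(k in S) ((m + delta) * (x k * (1 + 2 * al * c k)) - m * (1 - 2 * al * c k)).
  apply: ler_sum => k k_S; have /andP[x_ge0 x_le1] := x01 k.
  have c_ge0k := c_ge0 k.
  (* the slack is (1 - x)(a - m (1 - 2 al c)) + 4 al m x c + delta x (1 + 2 al c) *)
  have : (1 - x k) * (m * (1 - 2 * al * c k)) <= (1 - x k) * a k.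
    by rewrite ler_wpM2l ?subr_ge0 ?lb_in.
  have : 0 <= m * x k * (al * c k) by rewrite !mulr_ge0.
  have : 0 <= delta * (x k * (1 + 2 * al * c k)) by rewrite !mulr_ge0 // addr_ge0 // !mulr_ge0.
  lra.
have out_S : \sum_(k | k \notin S) x k * a k <=
    \sum_(k | k \notin S) (m + delta) * (x k * (1 + 2 * al * c k)).
  apply: ler_sum => k k_out; rewrite mulrCA ler_wpM2l ?ub_out //.
  by case/andP: (x01 k).
rewrite !sumrB -!mulr_sumr in in_S; rewrite -!mulr_sumr in out_S.
lra.
Qed.
Lemma no_good_swap_average (delta : R) i0 : 0 <= delta -> i0 \in S' ->
  (forall i j, i \in S' -> j \notin S ->
     a j / (1 + 2 * al * c j) - a i / (1 - 2 * al * c i) < delta) ->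
  exists2 m, 0 <= m &
    m * (#|S|%:R - 2 * al * \sum_(k in S) c k) <= \sum_(k in S) a k /\
    \sum_k x k * a k - \sum_(k in S) a k <=
    (m + delta) * (\sum_k x k + 2 * al * \sum_k x k * c k)
    - m * (#|S|%:R - 2 * al * \sum_(k in S) c k).
Proof.
move=> delta_ge0 i0_in no_swap.
have [m m_ge0 [lb_in ub_out]] := no_good_swap_bounds i0_in no_swap.
have sum_in : \sum_(k in S) (1 - 2 * al * c k) = #|S|%:R - 2 * al * \sum_(k in S) c k.
  by rewrite sumrB sumr_const mulr_sumr.
have sum_x : \sum_k x k * (1 + 2 * al * c k) = \sum_k x k + 2 * al * \sum_k x k * c k.
  by rewrite mulr_sumr -big_split; apply: eq_bigr => k _ /=; ring.
exists m => //; rewrite -sum_in -sum_x; split; last exact: sum_swap_bounds.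
by rewrite mulr_sumr; apply: ler_sum.
Qed.

Lemma small_part_nonempty : 2 * al * \sum_(k in S) c k < #|S|%:R -> exists i0, i0 \in S'.
Proof.
move=> C_lt; apply/existsP; move: C_lt; apply: contraTT => /existsPn none.
rewrite -leNgt -sum1_card natr_sum mulr_sumr; apply: ler_sum => k k_S.
by have := none k; rewrite /S' inE k_S /= -leNgt.
Qed.

Lemma good_swap_exists (lam eps G : R) :
  0 < lam -> 0 < eps -> 0 <= G ->
  lam <= \sum_k x k * a k ->
  \sum_(k in S) a k + eps * lam < lam ->
  \sum_k x k + G <= #|S|%:R - 2 * al * \sum_(k in S) c k ->
  (2 * al * \sum_k x k * c k) ^+ 2 * lam <= G ^+ 2 * \sum_k x k * a k ->
  exists i j, i \in S' /\ j \notin S /\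
    eps / #|S|%:R * lam <= a j / (1 + 2 * al * c j) - a i / (1 - 2 * al * c i).
Proof.
move=> lam_gt0 eps_gt0 G_ge0; set Y := \sum_k _; set W := \sum_(k in S) _.
set q := \sum_k x k; set C := \sum_(k in S) c k; set P := \sum_k x k * c k.
set b := #|S|%:R => Y_ge W_lt E_ge P_le.
have x_ge0 k : 0 <= x k by case/andP: (x01 k).
have alC_ge0 : 0 <= 2 * al * C by rewrite !mulr_ge0 // sumr_ge0.
have q_gt0 : 0 < q.
  rewrite lt_def sumr_ge0 // andbT; apply: contraTneq Y_ge => /eqP.
  rewrite psumr_eq0 // => /allP x0; rewrite -ltNge /Y big1 // => k _.
  by rewrite (eqP (x0 k _)) ?mul0r ?mem_index_enum.
have [b_gt0 E_ge0] : 0 < b /\ 0 <= b - 2 * al * C by split; lra.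
have [i0 i0_in] : exists i0, i0 \in S' by apply: small_part_nonempty; rewrite -/C; lra.
set E := b - 2 * al * C; set delta := eps / b * lam.
have delta_ge0 : 0 <= delta by rewrite !mulr_ge0 // ltW // invr_gt0.
have deltaE_le : delta * E <= eps * lam.
  have -> : eps * lam = delta * b by rewrite /delta; field; rewrite gt_eqF.
  by rewrite ler_wpM2l // gerDl oppr_le0.
have [/existsP[i /existsP[j /and3P[i_in j_out]]]|/existsPn no_swap] :=
  boolP [exists i, exists j, [&& i \in S', j \notin S &
    delta <= a j / (1 + 2 * al * c j) - a i / (1 - 2 * al * c i)]].
  by exists i, j.
have [m m_ge0 [mE_le swap_le]] : exists2 m, 0 <= m & m * E <= W /\
    Y - W <= (m + delta) * (q + 2 * al * P) - m * E.
  apply: no_good_swap_average delta_ge0 i0_in _ => i j i_in j_out.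
  by have /existsPn/(_ j) := no_swap i; rewrite i_in j_out ltNge.
exfalso; have := average_ratio_lt m_ge0 delta_ge0 E_ge0 Y_ge W_lt deltaE_le swap_le mE_le.
rewrite -/E; have := mul_le_of_sqr_mul_le lam_gt0 Y_ge G_ge0 P_le.
have : Y * (q + G) <= Y * E by rewrite ler_wpM2l //; lra.
have : lam * q <= Y * q by rewrite ler_wpM2r // ltW.
lra.
Qed.

End Swap.

Lemma eigenvalue_dim_gt0 (F : fieldType) n (M : 'M[F]_n) a : eigenvalue M a -> (0 < n)%N.
Proof. by case: n M => // M /eigenvalueP[w _]; rewrite thinmx0 eqxx. Qed.

Section TraceInequalities.
Variables (R : realType) (d : nat).
Implicit Types (M N : 'M[R]_d) (u : 'cV[R]_d).

Lemma mxinner_outerE u M : mxinner (outer u) M = qform M u.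
Proof. by rewrite /mxinner /outer -mulmxA mxtrace_mulC trace_mx11. Qed.

Lemma tr_outer u : \tr (outer u) = norm2 u.
Proof. by rewrite /outer mxtrace_mulC trace_mx11 norm2E. Qed.

Lemma outer_sym u : (outer u)^T = outer u.
Proof. by rewrite /outer trmx_mul trmxK. Qed.

Lemma mxtrace_sum_outer_mul (I : finType) (P : pred I) (v : I -> 'cV[R]_d) M :
  \tr ((\sum_(k | P k) outer (v k)) *m M) = \sum_(k | P k) mxinner (outer (v k)) M.
Proof. by rewrite mulmx_suml raddf_sum. Qed.

Lemma mxtrace_sum_scale_outer_mul (I : finType) (w : I -> R) (v : I -> 'cV[R]_d) M :
  \tr ((\sum_k w k *: outer (v k)) *m M) = \sum_k w k * mxinner (outer (v k)) M.
Proof.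
by rewrite mulmx_suml raddf_sum; apply: eq_bigr => k _; rewrite /= -scalemxAl mxtraceZ.
Qed.

Lemma psd_tr_ge0 N : psd N -> 0 <= \tr N.
Proof.
case=> _ N_psd; have := tr_conjTmx_cols N 1%:M; rewrite trmx1 mul1mx mulmx1 => ->.
by apply: sumr_ge0 => e _; apply: N_psd.
Qed.

Lemma tr_le_sqrt_dim M : frob2 M = 1 -> \tr M <= Num.sqrt d%:R.
Proof.
move=> M1; apply: le_of_sqr_le; first exact: sqrtr_ge0.
by rewrite sqr_sqrtr ?ler0n //; have := tr_sqr_le M; rewrite M1 mulr1.
Qed.

Lemma lambda_min_le_tr_mul X N lam : X^T = X ->
  (forall mu, eigenvalue X mu -> lam <= mu) -> N^T = N ->
  lam * frob2 N <= \tr (X *m (N *m N)).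
Proof.
move=> X_sym X_lb N_sym.
rewrite mulmxA mxtrace_mulC mulmxA -[in Y in \tr (Y *m _ *m _)]N_sym tr_conjTmx_cols.
rewrite -sum_norm2_col mulr_sumr.
by apply: ler_sum => e _; apply: rayleigh_lb.
Qed.

Lemma mxinner_outer_sqr_le N u : N^T = N ->
  mxinner (outer u) N ^+ 2 <= norm2 u * mxinner (outer u) (N *m N).
Proof.
move=> N_sym; rewrite !mxinner_outerE -{2}N_sym qform_mulTmx /qform -mulmxA cV_dotE.
exact: cauchy_schwarz.
Qed.

Lemma tr_sum_outer (I : finType) (w : I -> R) (v : I -> 'cV[R]_d) :
  \tr (\sum_k w k *: outer (v k)) = \sum_k w k * norm2 (v k).
Proof. by rewrite raddf_sum; apply: eq_bigr => k _; rewrite /= mxtraceZ tr_outer. Qed.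

Lemma mxinner_outer_ge0 N u : psd N -> 0 <= mxinner (outer u) N.
Proof. by case=> _ N_psd; rewrite mxinner_outerE N_psd. Qed.

Lemma mxinner_outer_sqr_ge0 N u : N^T = N -> 0 <= mxinner (outer u) (N *m N).
Proof. by move=> N_sym; rewrite mxinner_outerE -{1}N_sym qform_mulTmx norm2_ge0. Qed.

Lemma sum_mxinner_outer_sqr_le (I : finType) (w : I -> R) (v : I -> 'cV[R]_d) N :
  (forall k, 0 <= w k) -> N^T = N ->
  (\sum_k w k * mxinner (outer (v k)) N) ^+ 2 <=
  \tr (\sum_k w k *: outer (v k)) * \sum_k w k * mxinner (outer (v k)) (N *m N).
Proof.
move=> w_ge0 N_sym; rewrite tr_sum_outer; apply: weighted_cauchy_schwarz => // k.
- exact: norm2_ge0.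
- exact: mxinner_outer_sqr_ge0.
- exact: mxinner_outer_sqr_le.
Qed.

End TraceInequalities.

Lemma posdef_unitmx (R : realType) d (M : 'M[R]_d) : posdef M -> M \in unitmx.
Proof.
case=> _ M_pd; apply: contraT => M_sing.
have /eigenvalueP[w w0 w_neq0] : eigenvalue M 0.
  by apply: eigenvalueNunitmx; rewrite -scalemx1 scale0r subr0.
by have := M_pd w^T; rewrite trmx_eq0 trmxK w0 scale0r mul0mx mxE ltxx => /(_ w_neq0).
Qed.

Lemma invmx_sqr (R : comUnitRingType) d (M : 'M[R]_d) : M \in unitmx ->
  invmx (M ^+ 2) = invmx M *m invmx M.
Proof.
move=> M_unit; have MM_unit : M *m M \in unitmx by rewrite unitmx_mul M_unit.
have inv_MM : M *m M *m (invmx M *m invmx M) = 1%:M.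
  by rewrite mulmxA -(mulmxA M) mulmxV // mulmx1 mulmxV.
by rewrite expr2 -mulmxE -[RHS](mulKmx MM_unit) inv_MM mulmx1.
Qed.

Section WeightMatrix.
Variables (R : realType) (d : nat) (Z Asqrt : 'M[R]_d) (alpha ell : R).
Let B := alpha *: Z - ell%:M.
Let A := invmx (B ^+ 2).
Hypotheses (B_pd : posdef B) (Asqrt_psd : psd Asqrt) (Asqrt_sqr : Asqrt *m Asqrt = A)
  (trA : \tr A = 1).

Let B_sym : B^T = B := B_pd.1.
Let Asqrt_sym : Asqrt^T = Asqrt := Asqrt_psd.1.
Let B_unit : B \in unitmx := posdef_unitmx B_pd.

Lemma frob2_sqrtA : frob2 Asqrt = 1.
Proof. by rewrite frob2E Asqrt_sym Asqrt_sqr. Qed.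

Lemma frob2_invB : frob2 (invmx B) = 1.
Proof. by rewrite frob2E trmx_inv B_sym -invmx_sqr. Qed.

Lemma tr_B_sqrtA_le : \tr (B *m Asqrt) <= d%:R.
Proof.
have frob2_BN : frob2 (B *m Asqrt) = d%:R.
  rewrite frob2E trmx_mul Asqrt_sym B_sym mulmxA mxtrace_mulC !mulmxA Asqrt_sqr /A invmx_sqr //.
  by rewrite -(mulmxA _ (invmx B) B) mulVmx // mulmx1 mulVmx // mxtrace1.
apply: le_of_sqr_le; first exact: ler0n.
by have := tr_sqr_le (B *m Asqrt); rewrite frob2_BN -expr2.
Qed.

Lemma qform_A_le u : qform A u <= norm2 u.
Proof.
rewrite -Asqrt_sqr -{1}Asqrt_sym qform_mulTmx.
by have := norm2_mulmx_le Asqrt u; rewrite frob2_sqrtA mul1r.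
Qed.

Lemma eigenvalue_B_ge1 mu : eigenvalue Z mu -> 1 <= alpha * mu - ell.
Proof.
case/eigenvalueP=> w wZ w_neq0; set nu := alpha * mu - ell.
have wB : w *m B = nu *: w.
  by rewrite mulmxBr -scalemxAr wZ mul_mx_scalar scalerA scalerBl mulrC.
have Bu : B *m w^T = nu *: w^T by rewrite -B_sym -trmx_mul wB linearZ.
set u := w^T in Bu *; have u_neq0 : u != 0 by rewrite /u trmx_eq0.
have u_gt0 := norm2_gt0 u_neq0.
have nu_gt0 : 0 < nu.
  by have := B_pd.2 u u_neq0; rewrite -mulmxA Bu -scalemxAr mxE -norm2E pmulr_lgt0.
have iBu : invmx B *m u = nu^-1 *: u.
  have := mulKmx B_unit u; rewrite Bu -scalemxAr => /(congr1 ( *:%R nu^-1)).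
  by rewrite scalerA mulVf ?gt_eqF // scale1r => <-.
have := qform_A_le u.
rewrite /A invmx_sqr // /qform -!mulmxA iBu -!scalemxAr iBu -!scalemxAr scalerA mxE -norm2E.
rewrite -[X in _ <= X]mul1r ler_pM2r // => nu2_le.
have : nu * nu^-1 = 1 by rewrite mulfV ?gt_eqF.
have : 0 < nu^-1 by rewrite invr_gt0.
nra.
Qed.

Lemma alpha_tr_Z_mul M : alpha * \tr (Z *m M) = \tr (B *m M) + ell * \tr M.
Proof.
rewrite -mxtraceZ scalemxAl -[alpha *: Z](subrK ell%:M) -/B.
by rewrite mulmxDl mxtraceD mul_scalar_mx mxtraceZ.
Qed.

Lemma alpha_tr_ZA_le : alpha * \tr (Z *m A) <= Num.sqrt d%:R + ell.
Proof.
rewrite alpha_tr_Z_mul trA mulr1 /A invmx_sqr // mulmxA mulmxV // mul1mx lerD2r.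
exact/tr_le_sqrt_dim/frob2_invB.
Qed.

Lemma alpha_tr_Z_sqrtA_le : alpha * \tr (Z *m Asqrt) <= d%:R + ell * \tr Asqrt.
Proof. by rewrite alpha_tr_Z_mul lerD2r tr_B_sqrtA_le. Qed.

Variables (eps lamX lamZ : R).
Hypotheses (eps_gt0 : 0 < eps) (lamX_gt0 : 0 < lamX)
  (alpha_eps : alpha * (eps * lamX) = Num.sqrt d%:R)
  (Z_eig : eigenvalue Z lamZ) (lamZ_le : lamZ <= (1 - 2 * eps) * lamX).

Let alpha_gt0 : 0 < alpha.
Proof.
rewrite -(pmulr_lgt0 _ (mulr_gt0 eps_gt0 lamX_gt0)) alpha_eps.
by rewrite sqrtr_gt0 ltr0n (eigenvalue_dim_gt0 Z_eig).
Qed.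

Lemma ell_le : ell <= alpha * lamX - 2 * Num.sqrt d%:R - 1.
Proof.
have := eigenvalue_B_ge1 Z_eig.
have : alpha * lamZ <= alpha * ((1 - 2 * eps) * lamX) by rewrite ler_wpM2l // ltW.
have -> : alpha * ((1 - 2 * eps) * lamX) = alpha * lamX - 2 * Num.sqrt d%:R.
  by rewrite -alpha_eps; ring.
lra.
Qed.

Lemma tr_ZA_lt : \tr (Z *m A) + eps * lamX < lamX.
Proof.
rewrite -(ltr_pM2l alpha_gt0) mulrDr alpha_eps.
have := alpha_tr_ZA_le; have := ell_le; lra.
Qed.

Lemma alpha_tr_Z_sqrtA_le_dim : alpha * \tr (Z *m Asqrt) <= d%:R + d%:R / eps.
Proof.
suff : ell * \tr Asqrt <= d%:R / eps by have := alpha_tr_Z_sqrtA_le; lra.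
have trAsqrt_ge0 := psd_tr_ge0 Asqrt_psd; have trAsqrt_le := tr_le_sqrt_dim frob2_sqrtA.
have d_eps_ge0 : 0 <= d%:R / eps by rewrite divr_ge0 ?ler0n ?ltW.
have [ell_le0|ell_gt0] := lerP ell 0; first by have := mulr_le0_ge0 ell_le0 trAsqrt_ge0; lra.
have -> : d%:R / eps = alpha * lamX * Num.sqrt d%:R.
  by rewrite -{1}[d%:R](sqr_sqrtr (ler0n _ _)) -alpha_eps; field; rewrite gt_eqF.
have := ell_le; nra.
Qed.

End WeightMatrix.

Lemma sqr_alpha_mul_le (R : rcfType) (d eps lam t P Y : R) :
  0 < d -> 0 < eps -> 0 < lam -> 0 <= t -> P ^+ 2 <= t * Y ->
  (2 * (Num.sqrt d / (eps * lam)) * P) ^+ 2 * lam <=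
  (2 * d / eps * Num.sqrt (t / d / lam)) ^+ 2 * Y.
Proof.
move=> d_gt0 eps_gt0 lam_gt0 t_ge0 P2_le; set c := 4 * d / (eps ^+ 2 * lam).
have -> : (2 * (Num.sqrt d / (eps * lam)) * P) ^+ 2 * lam = c * P ^+ 2.
  by rewrite !exprMn sqr_sqrtr ?ltW // /c; field; rewrite !gt_eqF.
have -> : (2 * d / eps * Num.sqrt (t / d / lam)) ^+ 2 * Y = c * (t * Y).
  rewrite !exprMn sqr_sqrtr; last by rewrite !divr_ge0 // ltW.
  by rewrite /c; field; rewrite !gt_eqF.
by rewrite ler_wpM2l // divr_ge0 ?mulr_ge0 ?sqr_ge0 ?ltW.
Qed.

Theorem proposition3p12 (R : realType) (n d : nat) (v : 'I_n -> 'cV[R]_d)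
  (x : 'I_n -> R) (S : {set 'I_n}) (eps lamX lamZ ell : R)
  (Asqrt : 'M[R]_d) :
  (forall i, 0 <= x i <= 1) ->
  let q := \sum_(i < n) x i in
  let X := \sum_(i < n) x i *: outer (v i) in
  is_lambda_min X lamX -> 0 < lamX ->
  let lamavg := \tr X / d%:R in
  let b := #|S| in
  let Z := \sum_(i in S) outer (v i) in
  0 < eps < 1 / 2 ->
  let alpha := Num.sqrt d%:R / (eps * lamX) in
  let A := invmx ((alpha *: Z - ell%:M) ^+ 2) in
  posdef (alpha *: Z - ell%:M) -> \tr A = 1 ->
  psd Asqrt -> Asqrt *m Asqrt = A ->
  let S' := [set i in S | 2 * alpha * mxinner (outer (v i)) Asqrt < 1] in
  let Phi := fun i j =>
    mxinner (outer (v j)) A / (1 + 2 * alpha * mxinner (outer (v j)) Asqrt)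
    - mxinner (outer (v i)) A / (1 - 2 * alpha * mxinner (outer (v i)) Asqrt) in
  is_lambda_min Z lamZ ->
  lamZ <= (1 - 2 * eps) * lamX ->
  b%:R >= q + 2 * (d%:R + d%:R / eps)
          + 2 * d%:R / eps * Num.sqrt (lamavg / lamX) ->
  exists i, exists j, i \in S' /\ j \notin S /\ Phi i j >= eps / b%:R * lamX.
Proof.
move=> x01 q X [_ X_min] lamX_gt0 lamavg b Z /andP[eps_gt0 _] alpha A B_pd trA
  Asqrt_psd Asqrt_sqr S' Phi [Z_eig _] lamZ_le b_ge.
have x_ge0 k : 0 <= x k by case/andP: (x01 k).
have d_gt0 : (0 < d)%N := eigenvalue_dim_gt0 Z_eig.
have alpha_gt0 : 0 < alpha by rewrite divr_gt0 ?sqrtr_gt0 ?ltr0n ?mulr_gt0.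
have alpha_eps : alpha * (eps * lamX) = Num.sqrt d%:R by rewrite divfK // mulf_neq0 ?gt_eqF.
have X_sym : X^T = X.
  by rewrite raddf_sum; apply: eq_bigr => k _; rewrite /= linearZ /= outer_sym.
have tr_XA := lambda_min_le_tr_mul X_sym X_min Asqrt_psd.1.
rewrite (frob2_sqrtA Asqrt_psd Asqrt_sqr trA) mulr1 Asqrt_sqr in tr_XA.
have tr_ZA := tr_ZA_lt B_pd Asqrt_psd Asqrt_sqr trA eps_gt0 lamX_gt0 alpha_eps Z_eig lamZ_le.
have tr_ZAsqrt :=
  alpha_tr_Z_sqrtA_le_dim B_pd Asqrt_psd Asqrt_sqr trA eps_gt0 lamX_gt0 alpha_eps Z_eig lamZ_le.
have CS := sum_mxinner_outer_sqr_le v x_ge0 Asqrt_psd.1; rewrite Asqrt_sqr in CS.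
rewrite mxtrace_sum_scale_outer_mul in tr_XA; rewrite !mxtrace_sum_outer_mul in tr_ZA tr_ZAsqrt.
pose G := 2 * d%:R / eps * Num.sqrt (lamavg / lamX).
have G_ge0 : 0 <= G by rewrite !mulr_ge0 ?sqrtr_ge0 ?invr_ge0 ?ler0n ?ltW.
apply: (good_swap_exists x01 _ _ (ltW alpha_gt0) lamX_gt0 eps_gt0 G_ge0 tr_XA tr_ZA).
- by move=> k; rewrite -Asqrt_sqr mxinner_outer_sqr_ge0 // Asqrt_psd.1.
- by move=> k; apply: mxinner_outer_ge0.
- by move: b_ge; rewrite /b /q -/G; lra.
- apply: sqr_alpha_mul_le => //; first by rewrite ltr0n.
  by rewrite tr_sum_outer; apply: sumr_ge0 => k _; rewrite mulr_ge0 ?norm2_ge0.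
Qed.
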